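(* For a word $u$ of length $n$, its left-seed array $\mathsf{LSeed}[1..n]$, where $\mathsf{LSeed}[i]=\mathrm{lseed}(u[1..i])$, can be computed in $O(n)$ time.
   Context: Words are over a finite alphabet; $u[1..i]$ is the prefix of length $i$. A word $s$ covers $w$ if every position of $w$ lies in some occurrence of $s$ in $w$. A seed of a word $x$ is a factor $s$ of $x$ such that $x$ is a factor of some word covered by $s$; a left seed of $x$ is a seed of $x$ which is a prefix of $x$; $\mathrm{lseed}(x)$ is the length of the shortest left seed of $x$. *)

From mathcomp Require Import all_boot.
Set Implicit Arguments. Unset Strict Implicit. Unset Printing Implicit Defensive.

(* Words are sequences of letters; letters are natural numbers (any word is
   over the finite alphabet of letters occurring in it). *)
Definition word := seq nat.

Definition occurs_at (s w : word) (i : nat) : bool :=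
  (i + size s <= size w) && (take (size s) (drop i w) == s).

Definition covers (s w : word) : Prop :=
  forall p, p < size w -> exists i, occurs_at s w i && (i <= p < i + size s).

Definition seed (s x : word) : Prop :=
  infix s x /\ exists w, covers s w /\ infix x w.

Definition left_seed (s x : word) : Prop := seed s x /\ prefix s x.

(* is_lseed x l  <->  lseed(x) = l, i.e. l is the length of the shortest
   left seed of x *)
Definition is_lseed (x : word) (l : nat) : Prop :=
  (exists s, left_seed s x /\ size s = l) /\
  (forall s, left_seed s x -> l <= size s).

(* Registers and memory cells hold natural numbers; every instruction
   costs one step. *)
Inductive instr : Type :=
  | IConst of nat & nat
  | IAdd   of nat & nat & nat
  | ISub   of nat & nat & nat
  | ILoad  of nat & nat
  | IStore of nat & nat
  | IJz    of nat & nat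
  | IJmp   of nat
  | IHalt.

Record state : Type := State { pc : nat; regs : nat -> nat; memory : nat -> nat }.

Definition upd (f : nat -> nat) (a v : nat) : nat -> nat :=
  fun x => if x == a then v else f x.

Definition halted (prog : seq instr) (st : state) : bool :=
  match nth IHalt prog (pc st) with IHalt => true | _ => false end.

Definition step (prog : seq instr) (st : state) : state :=
  let: State p R M := st in
  match nth IHalt prog p with
  | IConst r k => State p.+1 (upd R r k) M
  | IAdd r a b => State p.+1 (upd R r (R a + R b)) M
  | ISub r a b => State p.+1 (upd R r (R a - R b)) M
  | ILoad r a => State p.+1 (upd R r (M (R a))) M
  | IStore a b => State p.+1 R (upd M (R a) (R b))
  | IJz r l => State (if R r == 0 then l else p.+1) R M
  | IJmp l => State l R M
  | IHalt => st
  end.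

Definition exec (prog : seq instr) (t : nat) (st : state) : state :=
  iter t (step prog) st.

(* Input convention: register 0 holds n = |u|, memory cells 0..n-1 hold the
   letters of u, everything else is 0. *)
Definition init_state (u : word) : state :=
  State 0 (fun r => if r == 0 then size u else 0)
          (fun a => if a < size u then nth 0 u a else 0).

From mathcomp Require Import all_boot zify.
Set Implicit Arguments. Unset Strict Implicit. Unset Printing Implicit Defensive.

(* A prefix [s = u[0..L)] is a left seed of [x = u[0..i)] exactly when, for some
   [q] with [L <= q <= i], [s] covers [u[0..q)] and [x] has a period at most [q]:
   the occurrences of [s] lying inside an occurrence of [x] in a word covered
   by [s] spell such a [u[0..q)], and the first occurrence sticking out on the
   right gives the period; conversely [u[0..q)] followed by repetitions of the
   period is covered by [s] and starts with [x].  Hence, writing [reach q] for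
   the longest prefix of period at most [q] and [seed_reach L] for the largest
   [reach q] over the [q] whose shortest cover has length at most [L],
   [lseed(u[0..i))] is the least [L] with [i <= seed_reach L].
   Everything is computed in linear time: borders by Knuth-Morris-Pratt, the
   shortest covers of all prefixes by Breslauer's recurrence, [reach] and
   [seed_reach] by bucketing along periods and cover lengths, and the answers by
   a two-pointer sweep, [seed_reach] being monotone. *)

Lemma occurs_atP s w i : occurs_at s w i <->
  (i + size s <= size w /\ forall k, k < size s -> nth 0 w (i + k) = nth 0 s k).
Proof.
rewrite /occurs_at; split.
  case/andP=> H /eqP E; split=> // k Hk.
  by rewrite -E nth_take // nth_drop.
case=> H E; rewrite H /=; apply/eqP/(@eq_from_nth _ 0).
  rewrite size_takel // size_drop; lia.
move=> k; rewrite size_takel ?size_drop; last lia.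
by move=> Hk; rewrite nth_take // nth_drop E.
Qed.

Lemma bigmax_witness (m : nat) (P : pred 'I_m) (F : 'I_m -> nat) :
  0 < \max_(i | P i) F i -> exists i0, P i0 /\ \max_(i | P i) F i = F i0.
Proof.
case: (boolP [exists i0, P i0]) => [/existsP[i0 Pi0]|/existsPn N] R0.
  rewrite (bigmax_eq_arg i0) //. case: arg_maxnP => // i Pi _; by exists i.
suff : \max_(i | P i) F i <= 0 by lia.
apply/bigmax_leqP => i Pi; by move: (N i); rewrite Pi.
Qed.

Section LSeedArray.
Variable u : word.
Local Notation n := (size u).
Local Notation a k := (nth 0 u k).

(** * Borders, covers and periods of prefixes *)

Definition occ_pref L j := j + L <= n /\ forall k, k < L -> a (j + k) = a k.
Definition occ_prefb L j := (j + L <= n) && all (fun k => a (j + k) == a k) (iota 0 L).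

Lemma occ_prefP L j : reflect (occ_pref L j) (occ_prefb L j).
Proof.
apply: (iffP andP) => [[H /allP A]|[H A]]; split => //.
  by move=> k Hk; apply/eqP/A; rewrite mem_iota.
by apply/allP => k; rewrite mem_iota => /andP[_ Hk]; apply/eqP/A.
Qed.

Definition pcover L q :=
  forall p, p < q -> exists j, [/\ occ_pref L j, j + L <= q & j <= p < j + L].
Definition pcoverb L q :=
  all (fun p => has (fun j => [&& occ_prefb L j, j + L <= q & j <= p < j + L])
                    (iota 0 q)) (iota 0 q).

Lemma pcoverP L q : reflect (pcover L q) (pcoverb L q).
Proof.
apply: (iffP allP) => [A p Hp|C p].
  have : p \in iota 0 q by rewrite mem_iota.
  move/A => /hasP[j _ /and3P[/occ_prefP H1 H2 H3]].
  by exists j.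
rewrite mem_iota => /andP[_ Hp]; case: (C p Hp) => j [H1 H2 H3].
apply/hasP; exists j; first by rewrite mem_iota; lia.
by apply/and3P; split => //; apply/occ_prefP.
Qed.

Definition border q b := b <= q /\ forall k, k < b -> a k = a (q - b + k).

Lemma border_trans q b c : border q b -> border b c -> border q c.
Proof.
move=> [H1 H2] [H3 H4]; split; first lia.
move=> k Hk; rewrite (H4 k Hk) (H2 (b - c + k)); last lia.
congr (a _); lia.
Qed.

Lemma border_of_borders q b c : border q b -> border q c -> c <= b -> border b c.
Proof.
move=> [H1 H2] [H3 H4] cb; split => // k Hk.
rewrite (H4 k Hk) (H2 (b - c + k)); last lia. congr (a _); lia.
Qed.

Lemma border_occ_pref q L : q <= n -> border q L -> occ_pref L (q - L).
Proof.
move=> qn [H1 H2]; split; first lia.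
by move=> k Hk; rewrite (H2 k Hk).
Qed.

Lemma pcover_border L q : 0 < q -> pcover L q ->
  [/\ 0 < L, L <= q, q <= n, occ_pref L (q - L) & border q L].
Proof.
move=> q0 C; case: (C q.-1 ltac:(lia)) => j [[H1 H2] H3 H4].
have E : j = q - L by lia.
subst j; split; try lia.
- by split.
- split; first lia. by move=> k Hk; rewrite H2.
Qed.

Lemma pcover_refl L : L <= n -> pcover L L.
Proof. by move=> Ln p Hp; exists 0; split => //; lia. Qed.

Lemma pcover_trans x y z : pcover x y -> pcover y z -> pcover x z.
Proof.
move=> Cxy Cyz p Hp.
case: (Cyz p Hp) => j [[Hj1 Hj2] Hj3 Hj4].
case: (Cxy (p - j) ltac:(lia)) => j' [[Hk1 Hk2] Hk3 Hk4].
exists (j + j'); split; try lia.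
split; first lia.
move=> k Hk; rewrite -addnA Hj2; last lia.
by rewrite Hk2.
Qed.

Lemma pcover_shrink L q b : pcover L q -> border q b -> L <= b -> pcover L b.
Proof.
move=> C Sb Lb p Hp.
have q0 : 0 < q by case: Sb; lia.
case: (pcover_border q0 C) => L0 Lq qn _ SL.
have SbL : border b L := border_of_borders Sb SL Lb.
have bq : b <= q by case: Sb.
case: (leqP (b - L) p) => H.
  exists (b - L); split; try lia.
  apply: border_occ_pref => //; lia.
case: (C p ltac:(lia)) => j [H1 H2 H3].
by exists j; split => //; lia.
Qed.

Lemma pcover_prefix L q j : pcover L q -> occ_pref L j -> j + L <= q -> pcover L (j + L).
Proof.
move=> C O H p Hp.
case: (leqP j p) => Hjp; first by exists j; split => //; lia.
case: (C p ltac:(lia)) => j' [H1 H2 H3]; exists j'; split => //; lia.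
Qed.

Lemma pcover_extend L q j : pcover L q -> occ_pref L j -> j <= q <= j + L -> pcover L (j + L).
Proof.
move=> C O H p Hp.
case: (ltnP p q) => Hpq.
  case: (C p Hpq) => j' [H1 H2 H3]; exists j'; split => //; lia.
by exists j; split => //; lia.
Qed.

Definition borderb q b := (b < q) && all (fun k => a k == a (q - b + k)) (iota 0 b).

Lemma borderP q b : reflect (b < q /\ border q b) (borderb q b).
Proof.
apply: (iffP andP) => [[H /allP A]|[H [_ A]]]; split => //.
  split; first lia. by move=> k Hk; apply/eqP/A; rewrite mem_iota.
by apply/allP => k; rewrite mem_iota => /andP[_ Hk]; apply/eqP/A.
Qed.

(* The failure function of Knuth-Morris-Pratt; [lborder 0 = 0]. *)
Definition lborder q := \max_(b < q | borderb q b) b.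

Lemma lborder_spec q : 0 < q ->
  (lborder q < q /\ border q (lborder q)) /\
  forall b, b < q -> border q b -> b <= lborder q.
Proof.
move=> q0; split.
  have P0 : borderb q (Ordinal q0) by apply/borderP; split => //; split.
  rewrite /lborder (bigmax_eq_arg (Ordinal q0)) //.
  case: arg_maxnP => // i Pi _; exact/borderP.
move=> b bq Sb.
have -> : b = Ordinal bq by [].
by apply: (leq_bigmax_cond (Ordinal bq)); apply/borderP.
Qed.

Lemma lborder_lt q : 0 < q -> lborder q < q.
Proof. by move=> q0; have [[H _] _] := lborder_spec q0. Qed.

Lemma mincover_ex q : exists L, pcoverb L q || (L == q).
Proof. by exists q; rewrite eqxx orbT. Qed.

(* The length of the shortest cover of [u[0..q)]; the disjunct [L == q] only
   makes the minimum exist when [q > n]. *)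
Definition mincover q := ex_minn (mincover_ex q).

Lemma mincover_spec q : q <= n ->
  pcover (mincover q) q /\ forall L, pcover L q -> mincover q <= L.
Proof.
move=> qn; rewrite /mincover; case: ex_minnP => m Pm Min; split.
  case/orP: Pm => [/pcoverP //|/eqP ->]; exact: pcover_refl.
by move=> L /pcoverP C; apply: Min; rewrite C.
Qed.

Lemma mincover_bounds q : 0 < q -> q <= n -> 0 < mincover q /\ mincover q <= q.
Proof.
move=> q0 qn; have [C _] := mincover_spec qn.
by have [H1 H2 _ _ _] := pcover_border q0 C.
Qed.

Definition lastcover q c := \max_(q' < q | mincover q' == c) q'.

Lemma lastcover_ge q c q' : q' < q -> mincover q' = c -> q' <= lastcover q c.
Proof.
move=> H E; have -> : q' = Ordinal H by [].
by apply: (leq_bigmax_cond (Ordinal H)); rewrite /= E.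
Qed.

Lemma lastcover_witness q c : 0 < lastcover q c ->
  exists q', [/\ q' < q, mincover q' = c & q' = lastcover q c].
Proof.
case/bigmax_witness => i [/eqP Ei E]; by exists i.
Qed.

Section MincoverRecurrence.
Variable q : nat.
Hypotheses (q_gt0 : 0 < q) (q_le : q <= n).
Local Notation b := (lborder q).
Local Notation c := (mincover (lborder q)).

(* A proper cover of [u[0..q)] is a border, hence no longer than [b], and [c]
   covers it; the occurrence of [c] covering position [q - c - 1] ends a prefix
   whose shortest cover is [c]. *)
Lemma mincover_lt_lborder : mincover q < q ->
  [/\ 0 < b, mincover q = c & q - c <= lastcover q c].
Proof.
move=> Hmq.
have [[bq Sb] Bmax] := lborder_spec q_gt0.
have [Cq Cqmin] := mincover_spec q_le.
have [m0 mq _ _ Sm] := pcover_border q_gt0 Cq.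
have [Cb Cbmin] := mincover_spec (ltnW (leq_trans bq q_le)).
have mb : mincover q <= b by apply: Bmax.
have b0 : 0 < b by lia.
have cm : c <= mincover q by apply: Cbmin; exact: pcover_shrink Cq Sb mb.
have [c0 cb _ _ Sc] := pcover_border b0 Cb.
have Ccq : pcover c q.
  apply: pcover_trans Cq.
  exact: pcover_shrink Cb (border_of_borders Sb Sm mb) cm.
have Emc : mincover q = c by have := Cqmin _ Ccq; lia.
split => //.
case: (Ccq (q - c).-1 ltac:(lia)) => j [Oj Hj1 Hj2].
have Cq' : pcover c (j + c) := pcover_prefix Ccq Oj Hj1.
have q'0 : 0 < j + c by lia.
have [Cm' Cm'min] := mincover_spec (proj1 Oj).
have [_ _ _ _ Sc'] := pcover_border q'0 Cq'.
have m'c : mincover (j + c) <= c by apply: Cm'min.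
have cm' : c <= mincover (j + c).
  by apply: Cbmin; apply: pcover_trans Cb; exact: pcover_shrink Cm' Sc' m'c.
have E : mincover (j + c) = c by lia.
apply: leq_trans (lastcover_ge _ E); lia.
Qed.

(* If some earlier prefix covered by [c] reaches [q - c], the occurrence of [c]
   as a suffix of [u[0..q)] extends that cover to all of [u[0..q)]. *)
Lemma mincover_le_lborder : 0 < b -> q - c <= lastcover q c -> mincover q <= c.
Proof.
move=> b0 HR.
have [[bq Sb] _] := lborder_spec q_gt0.
have [Cb _] := mincover_spec (ltnW (leq_trans bq q_le)).
have [_ Cqmin] := mincover_spec q_le.
have [c0 cb _ _ Sc] := pcover_border b0 Cb.
have : 0 < lastcover q c by lia.
case/lastcover_witness => q' [H1 H2 H3].
have [Cq' _] := mincover_spec (ltnW (leq_trans H1 q_le)); rewrite H2 in Cq'.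
have Oc : occ_pref c (q - c) := border_occ_pref q_le (border_trans Sb Sc).
have := pcover_extend Cq' Oc ltac:(lia).
rewrite subnK; last lia.
exact: Cqmin.
Qed.

Lemma mincover_rec :
  mincover q = if (0 < b) && (q - c <= lastcover q c) then c else q.
Proof.
have [_ mq] := mincover_bounds q_gt0 q_le.
case: (ltnP (mincover q) q) => Hmq.
  by have [-> -> ->] := mincover_lt_lborder Hmq.
case: ifP => [/andP[b0 HR]|_]; last lia.
have := mincover_le_lborder b0 HR.
have [[bq _] _] := lborder_spec q_gt0.
have [_ cb] := mincover_bounds b0 (ltnW (leq_trans bq q_le)); lia.
Qed.

End MincoverRecurrence.

(* Invariant of the KMP scan computing [lborder q] from [lborder q.-1]: [k] is
   a candidate border of [q.-1], and no longer one extends by the letter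
   [a q.-1]. *)
Definition kmp_inv q k := (k < q.-1 /\ border q.-1 k) /\
  forall b, b < q.-1 -> border q.-1 b -> k < b -> a b <> a q.-1.

Lemma kmp_inv_init q : 1 < q -> kmp_inv q (lborder q.-1).
Proof.
move=> q1; have [[H1 H2] H3] := lborder_spec (ltac:(lia) : 0 < q.-1).
split => // b Hb Sb kb; have := H3 b Hb Sb; lia.
Qed.

Lemma kmp_inv_step q k : 1 < q -> kmp_inv q k -> 0 < k -> a k <> a q.-1 ->
  kmp_inv q (lborder k).
Proof.
move=> q1 [[kq Sk] I] k0 Nk.
have [[H1 H2] H3] := lborder_spec k0.
split; first by split; [lia | exact: border_trans Sk H2].
move=> b Hb Sb kb.
case: (ltngtP b k) => Hbk.
- have := H3 b Hbk (border_of_borders Sk Sb ltac:(lia)); lia.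
- exact: I.
- by rewrite Hbk.
Qed.

Lemma lborder_match q k : 1 < q -> kmp_inv q k -> a k = a q.-1 -> lborder q = k.+1.
Proof.
move=> q1 [[kq [_ Sk]] I] E.
have [[H1 [_ S]] H3] := lborder_spec (ltac:(lia) : 0 < q).
apply/eqP; rewrite eqn_leq; apply/andP; split; last first.
  apply: H3; first lia.
  split; first lia.
  move=> t Ht; case: (ltngtP t k) => Htk.
  - rewrite Sk //; congr (a _); lia.
  - lia.
  - subst t; rewrite E; congr (a _); lia.
case: (leqP (lborder q) k.+1) => // Hlt.
have E' : a (lborder q).-1 = a q.-1.
  rewrite S; last lia. congr (a _); lia.
exfalso; apply: (I (lborder q).-1) E'; try lia.
split; first lia.
move=> t Ht; rewrite S; last lia. congr (a _); lia.
Qed.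

Lemma lborder_nomatch q : 1 < q -> kmp_inv q 0 -> a 0 <> a q.-1 -> lborder q = 0.
Proof.
move=> q1 [_ I] N.
have [[H1 [_ S]] H3] := lborder_spec (ltac:(lia) : 0 < q).
case: (posnP (lborder q)) => // Hpos.
have E : a (lborder q).-1 = a q.-1.
  rewrite S; last lia. congr (a _); lia.
case: (posnP (lborder q).-1) => H0; first by rewrite H0 in E.
exfalso; apply: (I (lborder q).-1); try lia.
split; first lia.
move=> t Ht; rewrite S; last lia. congr (a _); lia.
Qed.

Lemma lborder_kmp_bound q k : 1 < q -> kmp_inv q k -> lborder q <= k.+1.
Proof.
move=> q1; elim/ltn_ind: k => k IH IK.
case: (a k =P a q.-1) => E; first by rewrite (lborder_match q1 IK E).
case: (posnP k) => k0; first by subst k; rewrite (lborder_nomatch q1 IK E).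
have Bk := lborder_lt k0.
have := IH (lborder k) Bk (kmp_inv_step q1 IK k0 E); lia.
Qed.

Definition period i j := forall k, k + j < i -> a k = a (k + j).

Definition minperiod i := i - lborder i.

Lemma minperiod_period i : 0 < i -> 0 < minperiod i /\ period i (minperiod i).
Proof.
move=> i0; have [[H1 [_ H2]] _] := lborder_spec i0.
split; first by rewrite /minperiod; lia.
move=> k Hk; rewrite H2; last by rewrite /minperiod in Hk; lia.
congr (a _); rewrite /minperiod; lia.
Qed.

Lemma minperiod_min i j : 0 < j -> j <= i -> period i j -> minperiod i <= j.
Proof.
move=> j0 ji P; rewrite /minperiod.
have [_ H] := lborder_spec (leq_trans j0 ji).
suff : i - j <= lborder i by lia.
apply: H; first lia.
split; first lia.
move=> k Hk; rewrite P; last lia. congr (a _); lia.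
Qed.

Lemma period_mod i j : 0 < j -> period i j -> forall k, k < i -> a (k %% j) = a k.
Proof.
move=> j0 P k Hk.
have E d r : r + d * j < i -> a (r + d * j) = a r.
  elim: d r => [|d IH] r H; first by rewrite mul0n addn0.
  rewrite (_ : r + d.+1 * j = (r + d * j) + j); last by rewrite mulSn; lia.
  rewrite -P; last lia.
  apply: IH; lia.
rewrite {2}(divn_eq k j) addnC E //; by rewrite addnC -divn_eq.
Qed.

(** * Left seeds of prefixes *)

Lemma prefix_take c i : c <= i -> i <= n -> prefix (take c u) (take i u).
Proof.
move=> ci iN; rewrite prefixE size_takel; last exact: leq_trans ci iN.
by rewrite take_takel.
Qed.

(* The witness word is [u[0..q)] followed by [i] copies of [u[0..j)]; it
   starts with [u[0..i)] because [j] is a period of it. *)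
Lemma left_seed_of_pcover L q i j : 0 < L -> L <= q -> q <= i -> i <= n ->
  pcover L q -> 0 < j -> j <= q -> period i j -> left_seed (take L u) (take i u).
Proof.
move=> L0 Lq qi iN C j0 jq P.
have Pf : prefix (take L u) (take i u) by apply: prefix_take => //; exact: leq_trans Lq qi.
split; last exact: Pf.
split; first exact/prefixW.
exists (mkseq (fun k => a (k %% j)) (q + i * j)); split.
- move=> p; rewrite size_mkseq => Hp.
  have [r [R1 R2 R3]] : exists r, [/\ r * j <= p, p - r * j < q & r <= i].
    case: (ltnP p q) => H; first by exists 0; rewrite mul0n; split => //; lia.
    have Ed := divn_eq (p - q) j; have He := ltn_pmod (p - q) j0.
    set d := (p - q) %/ j in Ed *; set e := (p - q) %% j in Ed He.
    have di : d < i by rewrite -(ltn_pmul2r j0); lia.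
    exists d.+1; rewrite mulSn; split; lia.
  have rij : r * j <= i * j by rewrite leq_mul2r R3 orbT.
  case: (C (p - r * j) R2) => j1 [[O1 O2] H1 H2].
  exists (r * j + j1); apply/andP; split; last by rewrite size_takel; lia.
  apply/occurs_atP; rewrite size_takel ?size_mkseq; last lia.
  split; first lia.
  move=> k Hk; rewrite nth_mkseq; last lia.
  rewrite nth_take // -addnA modnMDl (period_mod j0 P); last lia.
  exact: O2.
- have ij : i <= i * j by rewrite -{1}(muln1 i) leq_mul2l j0 orbT.
  apply: prefixW; rewrite prefixE size_takel //; apply/eqP/(@eq_from_nth _ 0).
    rewrite !size_takel ?size_mkseq //; lia.
  move=> k; rewrite size_takel; last by rewrite size_mkseq; lia.
  move=> Hk; rewrite !nth_take // nth_mkseq; last lia.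
  exact: (period_mod j0 P).
Qed.

(* A seed [s] of [u[0..i)] covering a word [w] in which [u[0..i)] occurs at
   position [A]: the occurrences of [s] inside this window cover a prefix of
   length [window_reach], and the first occurrence sticking out of the window
   on the right yields a period of [u[0..i)] no larger than it. *)
Section SeedWindow.
Variables (s w : word) (i A : nat).
Hypotheses (i_gt0 : 0 < i) (i_le : i <= n) (s_pref : s = take (size s) u) (s_le : size s <= i)
  (s_covers : covers s w) (w_window : forall k, k < i -> nth 0 w (A + k) = a k)
  (window_le : A + i <= size w).
Local Notation L := (size s).

Definition in_window t := [&& occurs_at s w t, A <= t & t + L <= A + i].

Definition window_reach := \max_(t < size w | in_window t) (t + L - A).

Lemma in_window_occ t : in_window t -> occ_pref L (t - A).
Proof.
case/and3P => /occurs_atP [H1 H2] H3 H4; split; first lia.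
move=> k Hk; rewrite -w_window; last lia.
rewrite (_ : A + (t - A + k) = t + k); last lia.
by rewrite H2 // s_pref nth_take.
Qed.

Lemma size_seed_gt0 : 0 < L.
Proof. by case: (s_covers (p := A) ltac:(lia)) => t /andP[_ H]; lia. Qed.

Lemma window_reach_max t : t < size w -> in_window t -> t + L - A <= window_reach.
Proof. by move=> Ht okt; exact: (leq_bigmax_cond (Ordinal Ht) okt). Qed.

Lemma window_reach_witness :
  exists t0, [/\ in_window t0, A <= t0, t0 + L <= A + i & window_reach = t0 + L - A].
Proof.
have okA : in_window A.
  apply/and3P; split; try lia.
  apply/occurs_atP; split; first lia.
  move=> k Hk; rewrite w_window; last lia.
  by rewrite [in RHS]s_pref nth_take.
have As : A < size w by lia.
have [t0 [okt0 E]] : exists t0 : 'I_(size w), in_window t0 /\ window_reach = t0 + L - A.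
  apply: bigmax_witness; apply: leq_trans (window_reach_max As okA).
  have := size_seed_gt0; lia.
exists t0; case/and3P: (okt0) => _ H1 H2; split => //.
Qed.

Lemma window_reach_pcover : pcover L window_reach.
Proof.
have [t0 [okt0 t0A t0i EQ]] := window_reach_witness.
move=> p Hp.
case: (ltnP p L) => HpL; first by exists 0; split; try lia; split; first lia.
case: (leqP (window_reach - L) p) => HpQ.
  by exists (t0 - A); split; try lia; exact: in_window_occ.
case: (s_covers (p := A + p) ltac:(lia)) => t /andP[Ot Ht].
have okt : in_window t by rewrite /in_window Ot; apply/andP; split; lia.
have := window_reach_max (t := t) ltac:(lia) okt.
by exists (t - A); split; try lia; exact: in_window_occ.
Qed.

Lemma window_reach_period : exists j, [/\ 0 < j, j <= window_reach & period i j].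
Proof.
have [t0 [okt0 t0A t0i EQ]] := window_reach_witness.
case: (ltnP window_reach i) => HQi; last by exists i; split; try lia; move=> k Hk; lia.
case: (s_covers (p := A + window_reach) ltac:(lia)) => t /andP[Ot Ht].
have tL : A + i < t + L.
  case: (leqP (t + L) (A + i)) => // H.
  have okt : in_window t by rewrite /in_window Ot H; apply/andP; split; lia.
  have := window_reach_max (t := t) ltac:(case/occurs_atP: Ot; lia) okt; lia.
exists (t - A); split; try lia.
move=> k Hk; case/occurs_atP: Ot => _ H2.
rewrite -[a (k + (t - A))]w_window; last lia.
rewrite (_ : A + (k + (t - A)) = t + k); last lia.
rewrite H2; last lia.
by rewrite s_pref nth_take //; lia.
Qed.

Lemma window_reach_bounds : L <= window_reach <= i.
Proof. have [t0 [_ t0A t0i ->]] := window_reach_witness; lia. Qed.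

End SeedWindow.

Lemma left_seed_pcover s i : 0 < i -> i <= n -> left_seed s (take i u) ->
  [/\ 0 < size s, size s <= i &
   exists q, [/\ size s <= q, q <= i, pcover (size s) q &
     exists j, [/\ 0 < j, j <= q & period i j]]].
Proof.
move=> i0 iN [[_ [w [Cw Ix]]] Px].
have sx : size (take i u) = i by rewrite size_takel.
have si : size s <= i by rewrite -sx; exact: size_prefix.
have Es : s = take (size s) u.
  by move: Px; rewrite prefixE => /eqP E; rewrite -[in LHS]E take_takel.
case/infixP: Ix => w1 [w2 Ew].
have Wx k : k < i -> nth 0 w (size w1 + k) = a k.
  move=> Hk; rewrite Ew nth_cat ltnNge leq_addr /= addKn nth_cat sx Hk.
  by rewrite nth_take.
have sw : size w1 + i <= size w by rewrite Ew !size_cat sx leq_add2l leq_addr.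
have L0 := size_seed_gt0 i0 iN si Cw sw.
have Qb := window_reach_bounds i0 iN Es si Cw Wx sw.
split => //; exists (window_reach s w i (size w1)); split; try lia.
- exact: window_reach_pcover i0 iN Es si Cw Wx sw.
- exact: window_reach_period i0 iN Es si Cw Wx sw.
Qed.

Lemma left_seed_take_mono c i i' : c <= i -> i <= i' -> i' <= n ->
  left_seed (take c u) (take i' u) -> left_seed (take c u) (take i u).
Proof.
move=> ci ii' i'n [[_ [w [Cw Ix]]] _].
split; last by apply: prefix_take; lia.
split; first by apply/prefixW/prefix_take; lia.
exists w; split => //.
apply: prefix_infix_trans Ix; exact: prefix_take.
Qed.

Lemma left_seed_refl i : 0 < i -> i <= n -> left_seed (take i u) (take i u).
Proof.
move=> i0 iN; split; last exact: prefix_refl.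
split; first exact: infix_refl.
exists (take i u); split; last exact: infix_refl.
move=> p Hp; exists 0; apply/andP; split; last lia.
by apply/occurs_atP; split.
Qed.

Definition reach q := \max_(i < n.+1 | (0 < i) && (minperiod i <= q)) i.

(* The longest prefix having a left seed of length at most [L]
   (see [is_lseed_seed_reach]). *)
Definition seed_reach L := \max_(q < n.+1 | (0 < q) && (mincover q <= L)) reach q.

Lemma reach_ge q i : 0 < i -> i <= n -> minperiod i <= q -> i <= reach q.
Proof.
move=> i0 iN H; have Hi : i < n.+1 by lia.
have -> : i = Ordinal Hi by [].
by apply: (leq_bigmax_cond (Ordinal Hi)); rewrite /= i0.
Qed.

Lemma seed_reach_ge L q : 0 < q -> q <= n -> mincover q <= L -> reach q <= seed_reach L.
Proof.
move=> q0 qn H; have Hq : q < n.+1 by lia.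
by apply: (leq_bigmax_cond (Ordinal Hq) (F := fun q : 'I_n.+1 => reach q)); rewrite /= q0.
Qed.

Lemma left_seed_seed_reach s i : 0 < i -> i <= n -> left_seed s (take i u) ->
  i <= seed_reach (size s).
Proof.
move=> i0 iN /(left_seed_pcover i0 iN) [L0 Li [q [Lq qi Cq [j [j0 jq Pj]]]]].
have qn : q <= n by lia.
apply: leq_trans (seed_reach_ge (ltac:(lia) : 0 < q) qn _); last first.
  exact: (mincover_spec qn).2.
apply: reach_ge => //; have := minperiod_min j0 (leq_trans jq qi) Pj; lia.
Qed.

(* Reaching [i] through [q] gives a left seed [u[0..mincover q)] of a longer
   prefix; if that seed is longer than [u[0..i)] itself, take the latter. *)
Lemma left_seed_of_seed_reach i g : 0 < i -> i <= n -> i <= seed_reach g ->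
  exists s, left_seed s (take i u) /\ size s <= g.
Proof.
move=> i0 iN HR.
have [q [/andP [q0 Cqg] ERq]] := bigmax_witness (ltac:(lia) : 0 < seed_reach g).
have qn : q <= n by have := ltn_ord q; lia.
have [Pq0 Pq] := minperiod_period q0.
have Eqq : q <= reach q by apply: reach_ge => //; rewrite /minperiod; lia.
have [i' [/andP [i'0 Pi'q] Ei']] := bigmax_witness (ltac:(lia) : 0 < reach q).
have i'n : i' <= n by have := ltn_ord i'; lia.
rewrite -/(seed_reach g) in ERq; rewrite -/(reach q) in Ei'.
have [Cq _] := mincover_spec qn.
have [c0 cq _ _ _] := pcover_border q0 Cq.
have [Pi'0 Pi'] := minperiod_period i'0.
have LS := left_seed_of_pcover c0 cq (ltac:(lia) : q <= i') i'n Cq Pi'0 Pi'q Pi'.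
case: (leqP (mincover q) i) => Hci.
  exists (take (mincover q) u); split; first by apply: left_seed_take_mono LS; lia.
  rewrite size_takel; lia.
exists (take i u); split; first exact: left_seed_refl.
rewrite size_takel; lia.
Qed.

Lemma is_lseed_seed_reach i g : 0 < i -> i <= n -> i <= seed_reach g ->
  (forall L, 0 < L -> L < g -> seed_reach L < i) -> is_lseed (take i u) g.
Proof.
move=> i0 iN HR Hmin.
have Min s : left_seed s (take i u) -> g <= size s.
  move=> LS; case: (leqP g (size s)) => // Hlt.
  have [L0 _ _] := left_seed_pcover i0 iN LS.
  have := Hmin _ L0 Hlt; have := left_seed_seed_reach i0 iN LS; lia.
split => //.
have [s [LS sg]] := left_seed_of_seed_reach i0 iN HR.
by exists s; split => //; have := Min s LS; lia.
Qed.

Lemma lborder1 : lborder 1 = 0.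
Proof. have [[H _] _] := lborder_spec (ltn0Sn 0); lia. Qed.

Lemma minperiod1 : minperiod 1 = 1.
Proof. by rewrite /minperiod lborder1. Qed.

Lemma minperiod_bounds i : 0 < i -> 0 < minperiod i /\ minperiod i <= i.
Proof. move=> i0; have := lborder_lt i0; rewrite /minperiod; lia. Qed.

Lemma mincover0 : mincover 0 = 0.
Proof.
have [_ H] := mincover_spec (leq0n n).
have : mincover 0 <= 0 by apply: H => p; rewrite ltn0.
lia.
Qed.

Lemma mincover1 : 0 < n -> mincover 1 = 1.
Proof. move=> n0; have := mincover_bounds (ltn0Sn 0) n0; lia. Qed.

Lemma lastcover0 c : lastcover 0 c = 0.
Proof. by rewrite /lastcover big_ord0. Qed.

Lemma lastcover_S q c : lastcover q.+1 c = if mincover q == c then q else lastcover q c.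
Proof.
rewrite /lastcover (big_mkcond (fun i : 'I_q.+1 => mincover i == c)) big_ord_recr /=.
rewrite -(big_mkcond (fun i : 'I_q => mincover i == c)).
case: eqP => _; last by rewrite maxn0.
apply/maxn_idPr/bigmax_leqP => i _; exact: ltnW.
Qed.

Lemma reach0 : reach 0 = 0.
Proof.
apply/eqP; rewrite -leqn0; apply/bigmax_leqP => i /andP[i0 H].
have := minperiod_bounds i0; lia.
Qed.

Lemma seed_reach0 : seed_reach 0 = 0.
Proof.
apply/eqP; rewrite -leqn0; apply/bigmax_leqP => i /andP[i0 H].
have := mincover_bounds i0 (ltnSE (ltn_ord i)); lia.
Qed.

Lemma leq_seed_reach L : 0 < L -> L <= n -> L <= seed_reach L.
Proof.
move=> L0 Ln; have HL : L < n.+1 by lia.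
have [_ CL] := mincover_bounds L0 Ln.
have : L <= reach L by apply: reach_ge => //; have := minperiod_bounds L0; lia.
move=> H; apply: leq_trans H _.
by apply: (leq_bigmax_cond (Ordinal HL) (F := fun q : 'I_n.+1 => reach q)); rewrite /= L0.
Qed.

(** * A linear-time RAM program *)

(* Registers 0, 1 and 16 hold [n], 1 and 0, and register [k + 8] holds the base
   address [k * (n + 1)] of table [k], for [2 <= k <= 6] (see [tables]).
   - pc 14-51: for [q = 2 .. n], a KMP scan yields [lborder q], [mincover_rec]
     yields [mincover q], and the tables [lastcover] and [last_minperiod] are
     updated;
   - pc 52-70: for [q = 1 .. n], register 15 accumulates [reach q], which is
     folded into [cover_reach] at [mincover q];
   - pc 71-91: a sweep over [i] (register 2) and [L] (register 3) keeping
     [seed_reach L] in register 15: while [seed_reach L < i], increase [L];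
     otherwise [L] is the answer for [u[0..i)], stored at [n + i - 1]. *)
Definition lseed_prog : seq instr := [::
 (*0*) IJz 0 92; IConst 1 1; IAdd 9 0 1; IAdd 10 9 9; IAdd 11 10 9;
 (*5*) IAdd 12 11 9; IAdd 13 12 9; IAdd 14 13 9; IAdd 4 11 1; IStore 4 1;
 (*10*) IAdd 4 12 1; IStore 4 1; IAdd 4 13 1; IStore 4 1; IConst 2 2;
 (*15*) ISub 7 2 0; IJz 7 18; IJmp 52; ISub 5 2 1; ILoad 6 5;
 (*20*) IAdd 4 10 5; ILoad 3 4; ILoad 7 3; ISub 8 7 6; ISub 15 6 7;
 (*25*) IAdd 8 8 15; IJz 8 31; IJz 3 32; IAdd 4 10 3; ILoad 3 4;
 (*30*) IJmp 22; IAdd 3 3 1; IAdd 4 10 2; IStore 4 3; IJz 3 42;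
 (*35*) IAdd 4 11 3; ILoad 5 4; IAdd 4 12 5; ILoad 7 4; ISub 8 2 5;
 (*40*) ISub 8 8 7; IJz 8 43; IAdd 5 2 16; IAdd 4 11 2; IStore 4 5;
 (*45*) IAdd 4 12 5; IStore 4 2; ISub 7 2 3; IAdd 4 13 7; IStore 4 2;
 (*50*) IAdd 2 2 1; IJmp 15; IConst 2 1; IConst 15 0; ISub 7 2 0;
 (*55*) IJz 7 57; IJmp 71; IAdd 4 13 2; ILoad 7 4; ISub 8 7 15;
 (*60*) IJz 8 62; IAdd 15 7 16; IAdd 4 11 2; ILoad 5 4; IAdd 4 14 5;
 (*65*) ILoad 7 4; ISub 8 15 7; IJz 8 69; IStore 4 15; IAdd 2 2 1;
 (*70*) IJmp 54; IConst 2 1; IConst 3 1; IAdd 4 14 1; ILoad 15 4;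
 (*75*) ISub 7 2 0; IJz 7 78; IJmp 92; ISub 8 2 15; IJz 8 87;
 (*80*) IAdd 3 3 1; IAdd 4 14 3; ILoad 7 4; ISub 8 7 15; IJz 8 78;
 (*85*) IAdd 15 7 16; IJmp 78; IAdd 4 0 2; ISub 4 4 1; IStore 4 3;
 (*90*) IAdd 2 2 1; IJmp 75; IHalt].

Definition reaches (P : state -> Prop) (st : state) (T : nat) :=
  exists t, t <= T /\ P (exec lseed_prog t st).

Lemma reaches_now P st T : P st -> reaches P st T.
Proof. by move=> H; exists 0. Qed.

Lemma reaches_step P st T : 0 < T -> reaches P (step lseed_prog st) T.-1 -> reaches P st T.
Proof. by case: T => // T _ [t [H1 H2]]; exists t.+1; split => //; rewrite /exec iterSr. Qed.

Lemma reaches_mono P st T T' : T <= T' -> reaches P st T -> reaches P st T'.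
Proof. by move=> H [t [H1 H2]]; exists t; split => //; apply: leq_trans H. Qed.

Lemma reaches_trans (Q P : state -> Prop) st T1 T2 :
  reaches Q st T1 -> (forall st', Q st' -> reaches P st' T2) -> reaches P st (T1 + T2).
Proof.
case=> t1 [H1 H2] K; case: (K _ H2) => t2 [H3 H4].
exists (t2 + t1); split; first by rewrite addnC leq_add.
by rewrite /exec iterD.
Qed.

Lemma updE f x v y : upd f x v y = if y == x then v else f y.
Proof. by []. Qed.

Ltac step_instr := apply: reaches_step; first lia; rewrite /step /lseed_prog /= ?updE /=.

(* Memory contents with tables [F k] (2 <= k <= 6) and answers [fO]; cell
   [k * (n + 1) + x] holds [F k x] and cell [n + i] holds [fO i]. *)
Definition mem_of (F : nat -> nat -> nat) (fO : nat -> nat) (y : nat) : nat :=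
  if y < n then a y
  else if y < n + n then fO (y - n)
  else if y < 2 * n.+1 then 0
  else if (2 <= y %/ n.+1 <= 6) then F (y %/ n.+1) (y %% n.+1) else 0.

Definition mem_repr (M : nat -> nat) F fO := forall y, M y = mem_of F fO y.

Definition tab_upd (F : nat -> nat -> nat) K x v :=
  fun k i => if (k == K) && (i == x) then v else F k i.

Definition same_tables (F G : nat -> nat -> nat) :=
  forall k x, 2 <= k <= 6 -> x <= n -> F k x = G k x.

Lemma tab_addr_div K x : x <= n ->
  (K * n.+1 + x) %/ n.+1 = K /\ (K * n.+1 + x) %% n.+1 = x.
Proof. by move=> xn; rewrite divnMDl // modnMDl divn_small ?modn_small; lia. Qed.

Lemma mem_of_in F fO y : y < n -> mem_of F fO y = a y.
Proof. by rewrite /mem_of => ->. Qed.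

Lemma mem_of_tab F fO K x : 2 <= K <= 6 -> x <= n -> mem_of F fO (K * n.+1 + x) = F K x.
Proof.
move=> HK xn; have [E1 E2] := tab_addr_div K xn.
rewrite /mem_of E1 E2 HK.
have H : 2 * n.+1 <= K * n.+1 by rewrite leq_mul2r; case/andP: HK => -> _; rewrite orbT.
rewrite ifF; last lia. rewrite ifF; last lia. rewrite ifF //; lia.
Qed.

Lemma mem_of_answer F fO x : x < n -> mem_of F fO (n + x) = fO x.
Proof. move=> xn; rewrite /mem_of ifF; last lia. rewrite ifT; last lia. by rewrite addKn. Qed.

Lemma mem_of_same_tables F G fO y : same_tables F G -> mem_of F fO y = mem_of G fO y.
Proof.
move=> H; rewrite /mem_of; case: ifP => // _; case: ifP => // _; case: ifP => // _.
case: ifP => // HK; apply: H => //.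
have := ltn_pmod y (ltn0Sn n); lia.
Qed.

Lemma mem_of_store F fO K x v y : 2 <= K <= 6 -> x <= n ->
  (if y == K * n.+1 + x then v else mem_of F fO y) = mem_of (tab_upd F K x v) fO y.
Proof.
move=> HK xn; case: eqP => [->|Ne].
  by rewrite mem_of_tab // /tab_upd !eqxx.
rewrite /mem_of; case: ifP => // _; case: ifP => // _; case: ifP => // _.
case: ifP => // HK'; rewrite /tab_upd.
case: eqP => // Ek; case: eqP => //= Ex; exfalso; apply: Ne.
by rewrite {1}(divn_eq y n.+1) Ek Ex.
Qed.

Lemma mem_of_store_answer F fO i v y : i < n ->
  (if y == n + i then v else mem_of F fO y) = mem_of F (upd fO i v) y.
Proof.
move=> iN; case: eqP => [->|Ne].
  rewrite /mem_of ifF; last lia. rewrite ifT; last lia.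
  by rewrite /upd addKn eqxx.
rewrite /mem_of; case: ifP => // H1; case: ifP => // H2.
rewrite /upd; case: eqP => // E; exfalso; apply: Ne; lia.
Qed.

Lemma mem_repr_store M F fO K x v addr : mem_repr M F fO -> addr = K * n.+1 + x ->
  2 <= K <= 6 -> x <= n -> mem_repr (upd M addr v) (tab_upd F K x v) fO.
Proof. by move=> H -> HK xn y; rewrite updE H mem_of_store. Qed.

Lemma mem_repr_store_answer M F fO i v addr : mem_repr M F fO -> addr = n + i -> i < n ->
  mem_repr (upd M addr v) F (upd fO i v).
Proof. by move=> H -> iN y; rewrite updE H mem_of_store_answer. Qed.

Lemma mem_repr_same_tables M F G fO : mem_repr M F fO -> same_tables F G -> mem_repr M G fO.
Proof. by move=> H E y; rewrite H; apply: mem_of_same_tables. Qed.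

Lemma mem_repr_update M F G fO K x v : mem_repr M F fO -> 2 <= K <= 6 -> x <= n ->
  same_tables (tab_upd F K x v) G -> mem_repr (upd M (K * n.+1 + x) v) G fO.
Proof. by move=> H HK xn E; apply: mem_repr_same_tables E; exact: mem_repr_store H _ HK xn. Qed.

Lemma mem_repr_tab M F fO K x : mem_repr M F fO -> 2 <= K <= 6 -> x <= n ->
  M (K * n.+1 + x) = F K x.
Proof. by move=> H HK xn; rewrite H mem_of_tab. Qed.

Lemma mem_repr_in M F fO y : mem_repr M F fO -> y < n -> M y = a y.
Proof. by move=> H yn; rewrite H mem_of_in. Qed.

Definition base_regs (R : nat -> nat) :=
  R 0 = n /\ R 1 = 1 /\ R 9 = n.+1 /\ R 10 = 2 * n.+1 /\ R 11 = 3 * n.+1 /\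
  R 12 = 4 * n.+1 /\ R 13 = 5 * n.+1 /\ R 14 = 6 * n.+1 /\ R 16 = 0.

Lemma base_regs_upd R r v : base_regs R ->
  r \notin [:: 0; 1; 9; 10; 11; 12; 13; 14; 16] -> base_regs (upd R r v).
Proof.
move=> [H0 [H1 [H9 [H10 [H11 [H12 [H13 [H14 H16]]]]]]]].
rewrite !inE => Hr; rewrite /base_regs !updE.
by repeat case: eqP => [E|_]; subst; rewrite ?eqxx ?orbT // in Hr.
Qed.

Ltac rw_regs :=
  repeat match goal with H : ?R ?x = _ |- context [?R ?x] => is_var R; rewrite H end.

Ltac base_regs_kept := repeat (apply: base_regs_upd; last done).

Ltac case_base HR := case: HR => H0 [H1 [H9 [H10 [H11 [H12 [H13 [H14 H16]]]]]]].

Definition border_tab q x := if (0 < x) && (x < q) then lborder x else 0.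

Definition cover_tab q x := if (0 < x) && (x < q) then mincover x else 0.

Definition last_minperiod q p := \max_(i < q | (0 < i) && (minperiod i == p)) i.

Definition cover_reach q c := \max_(q' < q | (0 < q') && (mincover q' == c)) reach q'.

(* Table [k] of the program, for [2 <= k <= 6], once the entries depending on
   the prefixes shorter than [qB], [qC], [qR], [qT], [qA] respectively have been
   computed. *)
Definition tables qB qC qR qT qA k x :=
  match k with
  | 2 => border_tab qB x
  | 3 => cover_tab qC x
  | 4 => lastcover qR x
  | 5 => last_minperiod qT x
  | 6 => cover_reach qA x
  | _ => 0
  end.

Local Notation full_tables := (tables n.+1 n.+1 n.+1 n.+1 n.+1).

Lemma last_minperiod1 p : last_minperiod 1 p = 0.
Proof. rewrite /last_minperiod big_pred0 // => i; by case: i => [[|]]. Qed.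

Lemma last_minperiod_S q p : 0 < q ->
  last_minperiod q.+1 p = if minperiod q == p then q else last_minperiod q p.
Proof.
move=> q0.
rewrite /last_minperiod (big_mkcond (fun i : 'I_q.+1 => (0 < i) && (minperiod i == p))).
rewrite big_ord_recr /= -(big_mkcond (fun i : 'I_q => (0 < i) && (minperiod i == p))) q0 /=.
case: eqP => _; last by rewrite maxn0.
apply/maxn_idPr/bigmax_leqP => i _; exact: ltnW.
Qed.

Lemma cover_reach1 c : cover_reach 1 c = 0.
Proof. rewrite /cover_reach big_pred0 // => i; by case: i => [[|]]. Qed.

Lemma cover_reach_S q c : 0 < q -> cover_reach q.+1 c =
  if mincover q == c then maxn (cover_reach q c) (reach q) else cover_reach q c.
Proof.
move=> q0.
rewrite /cover_reach (big_mkcond (fun i : 'I_q.+1 => (0 < i) && (mincover i == c))).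
rewrite big_ord_recr /= -(big_mkcond (fun i : 'I_q => (0 < i) && (mincover i == c))) q0 /=.
by case: eqP => _; last by rewrite maxn0.
Qed.

Lemma reach_S q : 0 < q -> reach q = maxn (reach q.-1) (last_minperiod n.+1 q).
Proof.
move=> q0; rewrite /reach (bigID (fun i : 'I_n.+1 => minperiod i <= q.-1)) /=.
by congr maxn; apply: eq_bigl => i /=; apply/idP/idP => H; lia.
Qed.

Lemma seed_reach_S L : seed_reach L.+1 = maxn (seed_reach L) (cover_reach n.+1 L.+1).
Proof.
rewrite /seed_reach (bigID (fun q : 'I_n.+1 => mincover q <= L)) /=.
by congr maxn; apply: eq_bigl => i /=; apply/idP/idP => H; lia.
Qed.

Ltac tables_cases := let k := fresh "k" in let i := fresh "i" in move=> k i _ _;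
  rewrite /tab_upd /tables; case: k => [|[|[|[|[|[|[|k]]]]]]] //=.

Lemma tables_next_border q qC qR qT qA : 0 < q ->
  same_tables (tab_upd (tables q qC qR qT qA) 2 q (lborder q)) (tables q.+1 qC qR qT qA).
Proof.
move=> q0; tables_cases.
rewrite /border_tab; case: eqP => [->|Ne]; first by rewrite q0 ltnSn.
case: ifP; case: ifP => //; lia.
Qed.

Lemma tables_next_cover q qB qR qT qA : 0 < q ->
  same_tables (tab_upd (tables qB q qR qT qA) 3 q (mincover q)) (tables qB q.+1 qR qT qA).
Proof.
move=> q0; tables_cases.
rewrite /cover_tab; case: eqP => [->|Ne]; first by rewrite q0 ltnSn.
case: ifP; case: ifP => //; lia.
Qed.

Lemma tables_next_lastcover q qB qC qT qA :
  same_tables (tab_upd (tables qB qC q qT qA) 4 (mincover q) q) (tables qB qC q.+1 qT qA).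
Proof.
tables_cases; rewrite lastcover_S; case: eqP => [->|Ne]; first by rewrite eqxx.
by case: eqP => // E; rewrite E in Ne.
Qed.

Lemma tables_next_minperiod q qB qC qR qA : 0 < q ->
  same_tables (tab_upd (tables qB qC qR q qA) 5 (minperiod q) q) (tables qB qC qR q.+1 qA).
Proof.
move=> q0; tables_cases.
rewrite last_minperiod_S //; case: eqP => [->|Ne]; first by rewrite eqxx.
by case: eqP => // E; rewrite E in Ne.
Qed.

Lemma tables_next_reach_keep q : 0 < q -> reach q <= cover_reach q (mincover q) ->
  same_tables (tables n.+1 n.+1 n.+1 n.+1 q) (tables n.+1 n.+1 n.+1 n.+1 q.+1).
Proof.
move=> q0 H; tables_cases; rewrite cover_reach_S //; case: eqP => // <-.
by apply/esym/maxn_idPl.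
Qed.

Lemma tables_next_reach_store q : 0 < q -> cover_reach q (mincover q) < reach q ->
  same_tables (tab_upd (tables n.+1 n.+1 n.+1 n.+1 q) 6 (mincover q) (reach q))
              (tables n.+1 n.+1 n.+1 n.+1 q.+1).
Proof.
move=> q0 H; tables_cases; rewrite cover_reach_S //; case: eqP => [->|Ne]; rewrite ?eqxx.
  by apply/esym/maxn_idPr/ltnW.
by case: eqP => // E; rewrite E in Ne.
Qed.

Definition phase1_inv q st :=
  [/\ pc st = 15, 1 < q <= n.+1, base_regs (regs st), regs st 2 = q &
   mem_repr (memory st) (tables q q q q 1) (fun _ => 0)].

Lemma init_run : 0 < n -> reaches (phase1_inv 2) (init_state u) 15.
Proof.
move=> n0; rewrite /init_state.
have HM0 : mem_repr (fun a => if a < n then nth 0 u a else 0) (fun _ _ => 0) (fun _ => 0).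
  move=> y; rewrite /mem_of; case: ifP => //.
  by repeat case: ifP.
step_instr. have -> : (n == 0) = false by apply/eqP; lia.
do 14 step_instr.
apply: reaches_now; repeat split => //=; rewrite ?updE /=; try lia.
apply: mem_repr_same_tables.
  apply: (mem_repr_store (K := 5) (x := 1)) => //; last lia.
  apply: (mem_repr_store (K := 4) (x := 1)) => //; last lia.
  by apply: (mem_repr_store (K := 3) (x := 1)) => //; lia.
tables_cases.
- by rewrite /border_tab; case: i => [|[|i]] //=; rewrite lborder1.
- by rewrite /cover_tab; case: i => [|[|i]] //=; rewrite mincover1.
- by rewrite lastcover_S lastcover_S lastcover0 mincover0 mincover1 //; case: i => [|[|i]].
- by rewrite last_minperiod_S // last_minperiod1 minperiod1; case: i => [|[|i]].
- by rewrite cover_reach1.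
Qed.

Lemma kmp_loop_run q k R M T : 1 < q -> q <= n ->
  base_regs R -> R 2 = q -> R 6 = a q.-1 -> R 3 = k ->
  kmp_inv q k -> mem_repr M (tables q q q q 1) (fun _ => 0) ->
  9 * (k.+1 - lborder q) + 6 <= T ->
  reaches (fun st => [/\ pc st = 32, base_regs (regs st), regs st 2 = q, regs st 3 = lborder q &
     mem_repr (memory st) (tables q q q q 1) (fun _ => 0)]) (State 22 R M) T.
Proof.
move=> q1 qn; elim/ltn_ind: k R T => k IH R T HR H2 H6 H3 IK HM HT.
have [[kq _] _] := IK.
have kn : k < n by lia.
have HR' := HR; case_base HR'.
step_instr. rw_regs. rewrite (mem_repr_in HM kn).
do 4 step_instr. rw_regs.
case: (a k =P a q.-1) => E.
  rewrite E subnn /=. have EB := lborder_match q1 IK E.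
  step_instr. rw_regs. apply: reaches_now; split => //=; rewrite ?updE /=; rw_regs; try lia.
  all: try by base_regs_kept.
rewrite ifF /=; last by apply/eqP; lia.
step_instr. rw_regs. case: (posnP k) => k0.
  have EB : lborder q = 0 by rewrite k0 in IK E; exact: lborder_nomatch q1 IK E.
  apply: reaches_now; split => //=; rewrite ?updE /=; rw_regs; try lia.
  all: try by base_regs_kept.
have Bk := lborder_lt k0.
have Bq := lborder_kmp_bound q1 (kmp_inv_step q1 IK k0 E).
have EBk : border_tab q k = lborder k by rewrite /border_tab ifT //; apply/andP; lia.
do 2 step_instr. rw_regs. rewrite (mem_repr_tab HM) //=; last lia. rewrite EBk.
step_instr.
apply: (IH (lborder k) Bk) => //=; rewrite ?updE /=; rw_regs; try lia.
all: try by base_regs_kept.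
all: try exact: kmp_inv_step.
Qed.

Definition phase1_mid q st := pc st = 43 /\ base_regs (regs st) /\ regs st 2 = q /\
  regs st 3 = lborder q /\ regs st 5 = mincover q /\
  mem_repr (memory st) (tables q.+1 q q q 1) (fun _ => 0).

Lemma cover_recurrence_run q R M : 1 < q -> q <= n -> base_regs R -> R 2 = q -> R 3 = lborder q ->
  mem_repr M (tables q q q q 1) (fun _ => 0) -> reaches (phase1_mid q) (State 32 R M) 13.
Proof.
move=> q1 qn HR H2 H3 HM.
have HR' := HR; case_base HR'.
have q0 : 0 < q by lia.
have Bq := lborder_lt q0.
have HM' := mem_repr_update (K := 2) HM isT qn (tables_next_border q q q 1 q0).
have Erec := mincover_rec q0 qn.
do 2 step_instr. rw_regs. set M1 := upd M _ _ in HM' *; clearbody M1. step_instr. rw_regs.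
case: (posnP (lborder q)) => b0.
  rewrite b0 /= in Erec.
  step_instr. rw_regs. apply: reaches_now; repeat split => //=; rewrite ?updE /=; rw_regs; try lia.
have bn : lborder q <= n by lia.
have [c0 cb] := mincover_bounds b0 bn.
do 2 step_instr. rw_regs. rewrite (mem_repr_tab HM') //; try lia. rewrite /=.
rewrite /cover_tab ifT; last by apply/andP; lia.
do 2 step_instr. rw_regs. rewrite (mem_repr_tab HM') //; try lia. rewrite /=.
do 3 step_instr. rw_regs. rewrite b0 /= in Erec.
case: (leqP (q - mincover (lborder q)) (lastcover q (mincover (lborder q)))) => HRg.
  rewrite HRg in Erec; rewrite ifT /=; last lia.
  apply: reaches_now; repeat split => //=; rewrite ?updE /=; rw_regs; try lia.
rewrite leqNgt HRg /= in Erec; rewrite ifF /=; last lia.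
step_instr. rw_regs. apply: reaches_now; repeat split => //=; rewrite ?updE /=; rw_regs; try lia.
Qed.

Lemma phase1_store_run q R M : 1 < q -> q <= n ->
  base_regs R -> R 2 = q -> R 3 = lborder q -> R 5 = mincover q ->
  mem_repr M (tables q.+1 q q q 1) (fun _ => 0) -> reaches (phase1_inv q.+1) (State 43 R M) 9.
Proof.
move=> q1 qn HR H2 H3 H5 HM.
have HR' := HR; case_base HR'.
have q0 : 0 < q by lia.
have Bq := lborder_lt q0.
have [c0 cq] := mincover_bounds q0 qn.
have HM1 := mem_repr_update (K := 3) HM isT qn (tables_next_cover q.+1 q q 1 q0).
have HM2 := mem_repr_update (K := 4) HM1 isT (leq_trans cq qn)
  (tables_next_lastcover q q.+1 q.+1 q 1).
have Pn : minperiod q <= n by rewrite /minperiod; lia.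
have HM3 := mem_repr_update (K := 5) HM2 isT Pn (tables_next_minperiod q.+1 q.+1 q.+1 1 q0).
do 2 step_instr; rw_regs; do 2 step_instr; rw_regs.
do 3 step_instr; rw_regs; do 2 step_instr; rw_regs.
apply: reaches_now; repeat split => //=; rewrite ?updE /=; rw_regs; try lia.
Qed.

Lemma phase1_iter q st : phase1_inv q st -> q <= n ->
  reaches (phase1_inv q.+1) st (45 + 9 * lborder q.-1 - 9 * lborder q).
Proof.
case: st => p R M [/= Hp /andP[q1 _] HR H2 HM] qn; subst p.
have HR' := HR; case_base HR'.
have q0 : 0 < q by lia.
have IK := kmp_inv_init q1.
have Bb := lborder_kmp_bound q1 IK.
have Bq1 : lborder q.-1 < q.-1 by apply: lborder_lt; lia.
have E1 : q - 1 = q.-1 by lia.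
have EB : border_tab q q.-1 = lborder q.-1 by rewrite /border_tab ifT //; apply/andP; lia.
apply: (@reaches_mono _ _ (6 + ((9 * ((lborder q.-1).+1 - lborder q) + 6) + (13 + 9)))); first lia.
do 2 step_instr. rw_regs. have -> : (q - n == 0) = true by apply/eqP; lia.
have Hq1 : q.-1 < n by lia.
do 2 step_instr. rw_regs. rewrite E1 (mem_repr_in HM Hq1).
have Hq2 : q.-1 <= n by lia.
do 2 step_instr. rw_regs. rewrite (mem_repr_tab (K:=2) HM isT Hq2) /= EB.
rewrite add0n.
apply: reaches_trans.
  apply: (kmp_loop_run (q:=q) (k:=lborder q.-1)) => //=; rewrite ?updE /=; rw_regs; try lia.
move=> [p2 R2 M2] [/= Hp2 HR2 H22 H23 HM2]; subst p2.
apply: reaches_trans; first by apply: (cover_recurrence_run (q:=q)).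
move=> [p3 R3 M3] [/= Hp3 [HR3 [H32 [H33 [H35 HM3]]]]]; subst p3.
by apply: (phase1_store_run (q:=q)).
Qed.

Definition phase1_post st := pc st = 52 /\ base_regs (regs st) /\
  mem_repr (memory st) (tables n.+1 n.+1 n.+1 n.+1 1) (fun _ => 0).

Lemma phase1_run m q st : n.+1 - q = m -> phase1_inv q st ->
  reaches phase1_post st (45 * (n.+1 - q) + 9 * lborder q.-1 + 3).
Proof.
elim: m q st => [|m IH] q st Hm HI.
  case: st HI => p R M [/= Hp /andP[q1 qn] HR H2 HM]; subst p.
  have HR' := HR; case_base HR'.
  have Eq : q = n.+1 by lia.
  rewrite Eq subnn.
  do 2 step_instr. rw_regs. have -> : (q - n == 0) = false by apply/eqP; lia.
  step_instr. apply: reaches_now; repeat split => //=; rewrite ?updE /=; rw_regs; try lia.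
  all: try by rewrite -Eq.
have qn : q <= n by case: HI => _ /andP[]; lia.
have q1 : 1 < q by case: HI => _ /andP[].
have Bb := lborder_kmp_bound q1 (kmp_inv_init q1).
apply: reaches_mono; last first.
  apply: reaches_trans; first exact: (phase1_iter HI qn).
  move=> st' H'; apply: IH H'; lia.
rewrite /=; lia.
Qed.

Definition phase2_inv q st := pc st = 54 /\ 0 < q <= n.+1 /\ base_regs (regs st) /\ regs st 2 = q /\
  regs st 15 = reach q.-1 /\ mem_repr (memory st) (tables n.+1 n.+1 n.+1 n.+1 q) (fun _ => 0).

Lemma phase1_to_phase2_run st : phase1_post st -> reaches (phase2_inv 1) st 2.
Proof.
case: st => p R M [/= Hp [HR HM]]; subst p.
have HR' := HR; case_base HR'.
do 2 step_instr. apply: reaches_now; repeat split => //=; rewrite ?updE /=; rw_regs; try lia.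
by rewrite reach0.
Qed.

Definition phase2_mid q st := pc st = 62 /\ base_regs (regs st) /\ regs st 2 = q /\
  regs st 15 = reach q /\ mem_repr (memory st) (tables n.+1 n.+1 n.+1 n.+1 q) (fun _ => 0).

Lemma phase2_reach_run q st : phase2_inv q st -> q <= n -> reaches (phase2_mid q) st 7.
Proof.
case: st => p R M [/= Hp [/andP[q0 _] [HR [H2 [H15 HM]]]]] qn; subst p.
have HR' := HR; case_base HR'.
have ES := reach_S q0.
do 2 step_instr. rw_regs. have -> : (q - n == 0) = true by apply/eqP; lia.
do 2 step_instr. rw_regs. rewrite (mem_repr_tab (K:=5) HM isT qn) /=.
do 2 step_instr. rw_regs.
case: (leqP (last_minperiod n.+1 q) (reach q.-1)) => HT.
  rewrite ifT /=; last lia.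
  apply: reaches_now; repeat split => //=; rewrite ?updE /=; rw_regs; try lia.
rewrite ifF /=; last lia.
step_instr. rw_regs. apply: reaches_now; repeat split => //=; rewrite ?updE /=; rw_regs; try lia.
Qed.

Lemma phase2_cover_reach_run q st : phase2_mid q st -> 0 < q -> q <= n ->
  reaches (phase2_inv q.+1) st 9.
Proof.
case: st => p R M [/= Hp [HR [H2 [H15 HM]]]] q0 qn; subst p.
have HR' := HR; case_base HR'.
have [c0 cq] := mincover_bounds q0 qn.
have cn : mincover q <= n by lia.
have EC : cover_tab n.+1 q = mincover q by rewrite /cover_tab ifT //; apply/andP; lia.
do 2 step_instr. rw_regs. rewrite (mem_repr_tab (K:=3) HM isT qn) /= EC.
do 2 step_instr. rw_regs. rewrite (mem_repr_tab (K:=6) HM isT cn) /=.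
do 2 step_instr. rw_regs.
case: (leqP (reach q) (cover_reach q (mincover q))) => HA.
  rewrite ifT /=; last lia.
  do 2 step_instr; rw_regs.
  apply: reaches_now; repeat split => //=; rewrite ?updE /=; rw_regs; try lia.
  exact: mem_repr_same_tables HM (tables_next_reach_keep q0 HA).
rewrite ifF /=; last lia.
do 3 step_instr; rw_regs.
apply: reaches_now; repeat split => //=; rewrite ?updE /=; rw_regs; try lia.
exact: (mem_repr_update (K := 6) HM isT cn (tables_next_reach_store q0 HA)).
Qed.

Definition phase2_post st := pc st = 71 /\ base_regs (regs st) /\
  mem_repr (memory st) (full_tables) (fun _ => 0).

Lemma phase2_run m q st : n.+1 - q = m -> phase2_inv q st ->
  reaches phase2_post st (16 * (n.+1 - q) + 3).
Proof.
elim: m q st => [|m IH] q st Hm HI.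
  case: st HI => p R M [/= Hp [/andP[q0 qn] [HR [H2 [H15 HM]]]]]; subst p.
  have HR' := HR; case_base HR'.
  have Eq : q = n.+1 by lia.
  rewrite Eq subnn.
  do 2 step_instr. rw_regs. have -> : (q - n == 0) = false by apply/eqP; lia.
  step_instr. apply: reaches_now; repeat split => //=; rewrite ?updE /=; rw_regs; try lia.
  all: try by rewrite Eq in HM.
have qn : q <= n by case: HI => _ [/andP[]]; lia.
have q0 : 0 < q by case: HI => _ [/andP[]].
apply: (@reaches_mono _ _ (7 + (9 + (16 * (n.+1 - q.+1) + 3)))); first lia.
apply: reaches_trans; first exact: (phase2_reach_run HI qn).
move=> st1 H1; apply: reaches_trans; first exact: (phase2_cover_reach_run H1 q0 qn).
move=> st2 H2; apply: IH H2; lia.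
Qed.

Definition phase3_inv i L st := pc st = 78 /\ 0 < i <= n /\ 0 < L <= n /\ base_regs (regs st) /\
  regs st 2 = i /\ regs st 3 = L /\ regs st 15 = seed_reach L /\
  (forall L', 0 < L' -> L' < L -> seed_reach L' < i) /\
  exists fO, mem_repr (memory st) full_tables fO /\
    forall x, x.+1 < i -> is_lseed (take x.+1 u) (fO x).

Definition final_state st := halted lseed_prog st /\
  forall x, x < n -> is_lseed (take x.+1 u) (memory st (n + x)).

Lemma phase2_to_phase3_run st : 0 < n -> phase2_post st -> reaches (phase3_inv 1 1) st 6.
Proof.
case: st => p R M n0 [/= Hp [HR HM]]; subst p.
have HR' := HR; case_base HR'.
do 3 step_instr. rw_regs. step_instr. rewrite (mem_repr_tab (K:=6) HM isT n0) /=.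
do 2 step_instr. rw_regs. have -> : (1 - n == 0) = true by apply/eqP; lia.
apply: reaches_now; repeat split => //=; rewrite ?updE /=; rw_regs; try lia.
- by rewrite (seed_reach_S 0) seed_reach0 max0n.
- exists (fun _ => 0); split => // x; lia.
Qed.

Lemma phase3_next_length_run i L st : phase3_inv i L st -> seed_reach L < i ->
  reaches (phase3_inv i L.+1) st 9.
Proof.
case: st => p R M
  [/= Hp [/andP[i0 iN] [/andP[L0 Ln] [HR [H2 [H3 [H15 [Hlt [fO [HM HO]]]]]]]]]] HL; subst p.
have HR' := HR; case_base HR'.
have RL := leq_seed_reach L0 Ln.
have L1n : L.+1 <= n by lia.
have ES := seed_reach_S L.
do 2 step_instr. rw_regs. rewrite ifF /=; last lia.
do 3 step_instr. rw_regs. rewrite (_ : L + 1 = L.+1); last lia.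
rewrite (mem_repr_tab (K:=6) HM isT L1n) /=.
do 2 step_instr. rw_regs.
case: (leqP (cover_reach n.+1 L.+1) (seed_reach L)) => HA.
  rewrite ifT /=; last lia.
  apply: reaches_now; repeat split => //=; rewrite ?updE /=; rw_regs; try lia.
  - move=> L' L'0 L'L; case: (ltngtP L' L) => HL'; [exact: Hlt|lia|subst; lia].
  - by exists fO.
rewrite ifF /=; last lia.
do 2 step_instr. apply: reaches_now; repeat split => //=; rewrite ?updE /=; rw_regs; try lia.
- move=> L' L'0 L'L; case: (ltngtP L' L) => HL'; [exact: Hlt|lia|subst; lia].
- by exists fO.
Qed.

Lemma phase3_answer_run i L st : phase3_inv i L st -> i <= seed_reach L -> i < n ->
  reaches (phase3_inv i.+1 L) st 9.
Proof.
case: st => p R M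
  [/= Hp [/andP[i0 iN] [/andP[L0 Ln] [HR [H2 [H3 [H15 [Hlt [fO [HM HO]]]]]]]]]] HL iltn; subst p.
have HR' := HR; case_base HR'.
have LS := is_lseed_seed_reach i0 iN HL Hlt.
do 2 step_instr. rw_regs. rewrite ifT /=; last lia.
do 3 step_instr. rw_regs.
have HM' := mem_repr_store_answer L HM (_ : n + i - 1 = n + i.-1) (_ : i.-1 < n).
do 4 step_instr. rw_regs.
rewrite ifT /=; last lia.
apply: reaches_now; repeat split => //=; rewrite ?updE /=; rw_regs; try lia.
- move=> L' L'0 L'L; have := Hlt L' L'0 L'L; lia.
- exists (upd fO i.-1 L); split; first by apply: HM'; lia.
  move=> x xi; rewrite /upd; case: eqP => [->|Ne].
    by rewrite prednK.
  apply: HO; lia.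
Qed.

Lemma phase3_halt_run i L st : phase3_inv i L st -> i <= seed_reach L -> i = n ->
  reaches final_state st 10.
Proof.
case: st => p R M
  [/= Hp [/andP[i0 iN] [/andP[L0 Ln] [HR [H2 [H3 [H15 [Hlt [fO [HM HO]]]]]]]]]] HL Ei; subst p.
have HR' := HR; case_base HR'.
have LS := is_lseed_seed_reach i0 iN HL Hlt.
do 2 step_instr. rw_regs. rewrite ifT /=; last lia.
do 3 step_instr. rw_regs.
have HM' := mem_repr_store_answer L HM (_ : n + i - 1 = n + i.-1) (_ : i.-1 < n).
do 4 step_instr. rw_regs.
rewrite ifF /=; last lia.
step_instr. apply: reaches_now; split => //=.
move=> x xn; rewrite HM'; try lia.
rewrite mem_of_answer // /upd; case: eqP => [->|Ne].
  by rewrite prednK.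
apply: HO; lia.
Qed.

Lemma phase3_run m i L st : (n - L) + (n - i) = m -> phase3_inv i L st ->
  reaches final_state st (9 * (n - L) + 9 * (n - i) + 10).
Proof.
elim: m i L st => [|m IH] i L st Hm HI;
have [_ [/andP[i0 iN] [/andP[L0 Ln] [_ [_ [_ [_ [Hlt _]]]]]]]] := HI;
have RL := leq_seed_reach L0 Ln.
- apply: reaches_mono; last apply: (phase3_halt_run HI); lia.
case: (leqP i (seed_reach L)) => HL.
  case: (ltngtP i n) => Hin; last by apply: reaches_mono; last apply: (phase3_halt_run HI); lia.
    apply: (@reaches_mono _ _ (9 + (9 * (n - L) + 9 * (n - i.+1) + 10))); first lia.
    apply: reaches_trans; first exact: (phase3_answer_run HI HL Hin).
    move=> st' H'; apply: IH H'; lia.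
  lia.
apply: (@reaches_mono _ _ (9 + (9 * (n - L.+1) + 9 * (n - i) + 10))); first lia.
apply: reaches_trans; first exact: (phase3_next_length_run HI HL).
move=> st' H'; apply: IH H'; lia.
Qed.

Lemma lseed_prog_run : 0 < n -> reaches (final_state) (init_state u) (100 * n + 100).
Proof.
move=> n0.
have B1 := lborder1.
apply: (@reaches_mono _ _ (15 + ((45 * (n.+1 - 2) + 9 * lborder 1 + 3) +
  (2 + ((16 * (n.+1 - 1) + 3) + (6 + (9 * (n - 1) + 9 * (n - 1) + 10))))))); first lia.
apply: reaches_trans; first exact: init_run.
move=> s1 H1; apply: reaches_trans; first exact: (phase1_run (erefl _) H1).
move=> s2 H2; apply: reaches_trans; first exact: (phase1_to_phase2_run H2).
move=> s3 H3; apply: reaches_trans; first exact: (phase2_run (erefl _) H3).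
move=> s4 H4; apply: reaches_trans; first exact: (phase2_to_phase3_run n0 H4).
move=> s5 H5; exact: (phase3_run (erefl _) H5).
Qed.

End LSeedArray.
Theorem theorem1 :
  exists (prog : seq instr) (c : nat),
    forall u : word,
      exists t, t <= c * size u + c /\
        halted prog (exec prog t (init_state u)) /\
        forall i, i < size u ->
          is_lseed (take i.+1 u) (memory (exec prog t (init_state u)) (size u + i)).
Proof.
exists lseed_prog, 100 => u.
case: (posnP (size u)) => n0.
  exists 1; split; first lia.
  rewrite /exec /= /init_state /step /= n0 /=; split => // i; lia.
have [t [Ht [H1 H2]]] := lseed_prog_run n0.
by exists t.
Qed.
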